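(* Let $\ell\ge1$, $m\ge0$, positive integers $n_0,\dots,n_m$ with $n:=\sum_{j=0}^m n_j-1\ge1$, and distinct points $z_0=0,z_1,\dots,z_m$ in the open unit disc be given, and let $Z$, $e$ be as below. Let $t_1,\dots,t_\ell$ be positive integers with $t_1+\dots+t_\ell=n\ell$, let $t=\max_i t_i$, and let $V$, $N$ be as below. Then the first $\ell$ rows of the $\ell(n+1)\times\ell n$ matrix $VN$ are zero, so $VN=\begin{bmatrix}0_{\ell\times\ell n}\\ L\end{bmatrix}$ with $L\in\mathbb{C}^{\ell n\times\ell n}$, and $L$ is nonsingular if and only if $t_1=t_2=\dots=t_\ell=n$.
   Context: $Z_j$ is the $n_j\times n_j$ lower bidiagonal matrix with $z_j$ on the diagonal and $1$ on the first subdiagonal, and $Z=\operatorname{diag}(Z_0,\dots,Z_m)\in\mathbb{C}^{(n+1)\times(n+1)}$. $e\in\mathbb{R}^{n+1}$ is the column vector obtained by stacking the vectors $(1,0,\dots,0)'\in\mathbb{R}^{n_j}$, $j=0,\dots,m$. $V=\begin{bmatrix}(Ze)\otimes I_\ell & (Z^2e)\otimes I_\ell&\cdots&(Z^te)\otimes I_\ell\end{bmatrix}\in\mathbb{C}^{\ell(n+1)\times\ell t}$. For $k=1,\dots,t$, $N_k=\operatorname{diag}(e^k_{t_1},\dots,e^k_{t_\ell})\in\mathbb{R}^{\ell\times\ell n}$, where $e^k_{j}\in\mathbb{R}^{1\times j}$ is the row vector whose $k$-th entry is $1$ and other entries $0$ if $k\le j$, and the zero row vector of length $j$ if $k>j$;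 equivalently $\operatorname{diag}(z^{t_1},\dots,z^{t_\ell})\,\operatorname{diag}(\pi_{t_1}(z^{-1}),\dots,\pi_{t_\ell}(z^{-1}))=\sum_{k=1}^t N_k z^k$ with $\pi_\nu(z)=(z^{\nu-1},\dots,z,1)$. $N=\begin{bmatrix}N_1\\ \vdots\\ N_t\end{bmatrix}\in\mathbb{R}^{\ell t\times\ell n}$. $\otimes$ is the Kronecker product. *)

From HB Require Import structures.
From mathcomp Require Import all_boot all_order all_algebra.
From mathcomp Require Import reals.
From mathcomp Require Export mxtens complex.

Set Implicit Arguments.
Unset Strict Implicit.
Unset Printing Implicit Defensive.

Import GRing.Theory Num.Theory.
Local Open Scope ring_scope.

Section Defs.
Variable C : pzRingType.

Definition Zblk (zj : C) (k : nat) : 'M[C]_k :=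
  \matrix_(i, j) (if (i == j :> nat) then zj
                  else if (i == j.+1 :> nat) then 1 else 0).

Definition Zmat (m : nat) (nj : 'I_m.+1 -> nat) (z : 'I_m.+1 -> C)
  : 'M[C]_(\sum_(j < m.+1) nj j) :=
  \mxdiag_(j < m.+1) Zblk (z j) (nj j).

Definition evec (m : nat) (nj : 'I_m.+1 -> nat)
  : 'cV[C]_(\sum_(j < m.+1) nj j) :=
  \mxcol_(j < m.+1) (\col_(r < nj j) ((r == 0 :> nat)%:R : C)).

Definition Zpow_e (m n : nat) (nj : 'I_m.+1 -> nat) (z : 'I_m.+1 -> C)
  (hn : (\sum_(j < m.+1) nj j)%N = n.+1) (k : nat) : 'cV[C]_(n.+1) :=
  iter k (mulmx (castmx (hn, hn) (Zmat nj z))) (castmx (hn, erefl) (evec nj)).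

Definition Vmat (m n l t : nat) (nj : 'I_m.+1 -> nat) (z : 'I_m.+1 -> C)
  (hn : (\sum_(j < m.+1) nj j)%N = n.+1) :
  'M[C]_(n.+1 * l, \sum_(k < t) (1 * l)) :=
  \mxrow_(k < t) (Zpow_e z hn k.+1 *t (1%:M : 'M[C]_l)).

(* e^k_j : the 1 x j row vector with 1 in position k (1-based), zero if k > j. *)
Definition erow (k j : nat) : 'rV[C]_j := \row_(c < j) ((c.+1 == k)%:R : C).

Lemma sum1_ord (l : nat) : (\sum_(i < l) 1)%N = (1 * l)%N.
Proof. by rewrite sum1_card card_ord mul1n. Qed.

Definition Nk (l n : nat) (ts : 'I_l -> nat)
  (ht : (\sum_(i < l) ts i)%N = (n * l)%N) (k : nat) : 'M[C]_(1 * l, l * n) :=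
  castmx (sum1_ord l, etrans ht (mulnC n l))
    (\mxblock_(i < l, i' < l)
       (if i == i' then erow k (ts i') else (0 : 'M[C]_(1, ts i')))).

Definition Nmat (l n t : nat) (ts : 'I_l -> nat)
  (ht : (\sum_(i < l) ts i)%N = (n * l)%N) : 'M[C]_(\sum_(k < t) (1 * l), l * n) :=
  \mxcol_(k < t) Nk ht k.+1.

Lemma rows_split (n l : nat) : (n.+1 * l = l + l * n)%N.
Proof. by rewrite mulSn mulnC. Qed.

Definition VN (m n l t : nat) (nj : 'I_m.+1 -> nat) (z : 'I_m.+1 -> C)
  (hn : (\sum_(j < m.+1) nj j)%N = n.+1) (ts : 'I_l -> nat)
  (ht : (\sum_(i < l) ts i)%N = (n * l)%N) : 'M[C]_(l + l * n, l * n) :=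
  castmx (rows_split n l, erefl) (Vmat l t z hn *m Nmat t ht).

End Defs.

From HB Require Import structures.
From mathcomp Require Import all_boot all_order all_algebra.
From mathcomp Require Import reals.
From mathcomp Require Import mxtens complex.
Import GRing.Theory Num.Theory.
Local Open Scope ring_scope.

Set Implicit Arguments.
Unset Strict Implicit.
Unset Printing Implicit Defensive.

(* Split x along the column blocks of N, x = (x_1, ..., x_l) with x_s of
   length t_s.  Row a l + s of L x is row a + 1 of W_(t_s) x_s, where
   W_k = [Z e, ..., Z^k e]; the first l rows of V N are rows 0 of the Z^k e,
   which vanish because the entry of Z^k e in row r of block j is
   C(k, r) z_j^(k - r) and z_0 = 0.  Hence L is nonsingular iff every W_(t_s)
   deprived of its row 0 is injective.  Such an n x t_s matrix needs t_s <= n,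
   and then \sum_s t_s = n l forces t_s = n.  Conversely, if k <= n and
   W_k y = 0 (rows 1..n), the polynomial Q = \sum_b y_b X^(b+1) has all Hasse
   derivatives of order < n_j vanishing at z_j (row 0 is Q(z_0) = Q(0) = 0),
   so \prod_j (X - z_j)^(n_j), of degree n + 1, divides Q, of degree <= n:
   Q = 0 and y = 0. *)

Section OrdinalDelta.
Variable R : pzSemiRingType.

Lemma sum_ord_delta (N r : nat) (f : nat -> R) : (r < N)%N ->
  \sum_(j < N) (r == j :> nat)%:R * f j = f r.
Proof.
move=> ltrN; rewrite (bigD1 (Ordinal ltrN)) //= eqxx mul1r big1 ?addr0 // => j.
by rewrite -val_eqE eq_sym => /negbTE /= ->; rewrite mul0r.
Qed.

Lemma sum_ord_delta_succ (N r : nat) (f : nat -> R) : (r < N)%N ->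
  \sum_(j < N) (r == j.+1 :> nat)%:R * f j = if r is r'.+1 then f r' else 0.
Proof.
case: r => [|r] ltrN; first by rewrite big1 // => j _; rewrite mul0r.
by rewrite -(sum_ord_delta f (ltnW ltrN)); apply: eq_bigr => j _; rewrite eqSS.
Qed.

End OrdinalDelta.

Section ShiftedBlockPowers.
Variable R : comPzRingType.

Definition ecol0 (N : nat) : 'cV[R]_N := \col_(r < N) ((r == 0 :> nat)%:R).

Lemma Zblk_mulE (f : nat -> R) (zj : R) (N : nat) (v : 'cV[R]_N) (r : 'I_N) :
  (forall q : 'I_N, v q 0 = f q) ->
  (Zblk zj N *m v) r 0 = zj * f r + (if val r is r'.+1 then f r' else 0).
Proof.
move=> vE; rewrite mxE -(sum_ord_delta (fun j => zj * f j) (ltn_ord r)).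
rewrite -(sum_ord_delta_succ f (ltn_ord r)) -big_split /=.
apply: eq_bigr => j _; rewrite mxE vE.
case: eqP => [->|_]; first by rewrite eqn_leq ltnn andbF mul1r mul0r addr0.
by case: eqP; rewrite ?mul1r ?mul0r ?add0r.
Qed.

Lemma Zblk_iter_ecol0 (zj : R) (N k : nat) (r : 'I_N) :
  iter k (mulmx (Zblk zj N)) (ecol0 N) r 0 = 'C(k, r)%:R * zj ^+ (k - r).
Proof.
elim: k r => [|k IHk] r /=.
  by rewrite mxE; case: r => -[|r] ? /=; rewrite ?mulr1 ?mul0r.
rewrite (@Zblk_mulE (fun q : nat => 'C(k, q)%:R * zj ^+ (k - q))) //.
case: r => -[|r] ltrN /=; first by rewrite addr0 !bin0 subn0 mulrCA -exprS.
rewrite binS natrD mulrDl subSS; congr (_ + _).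
have [ltrk|leqkr] := ltnP r k; first by rewrite mulrCA -exprS subnSK.
by rewrite bin_small // !mul0r mulr0.
Qed.

End ShiftedBlockPowers.

Section KrylovColumns.
Variable R : comPzRingType.
Variables (m n : nat) (nj : 'I_m.+1 -> nat) (z : 'I_m.+1 -> R).
Variable hn : (\sum_(j < m.+1) nj j)%N = n.+1.

Lemma iter_Zmat_evec k :
  iter k (mulmx (Zmat nj z)) (evec R nj) =
  \mxcol_j iter k (mulmx (Zblk (z j) (nj j))) (ecol0 R (nj j)).
Proof. by elim: k => //= k ->; rewrite mul_mxdiag_mxcol. Qed.

Lemma Zpow_eE k :
  Zpow_e z hn k = castmx (hn, erefl) (iter k (mulmx (Zmat nj z)) (evec R nj)).
Proof. by elim: k => //= k ->; case: _ / hn. Qed.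

Lemma Zpow_e_Rank k j (r : 'I_(nj j)) :
  Zpow_e z hn k (cast_ord hn (tagnat.Rank j r)) 0 = 'C(k, r)%:R * z j ^+ (k - r).
Proof.
rewrite Zpow_eE castmxE cast_ordK iter_Zmat_evec mxE cast_ord_id Zblk_iter_ecol0.
by rewrite tagnat.Rank2K /= tagnat.Rank1K.
Qed.

Definition krylov_mx k : 'M[R]_(n, k) :=
  \matrix_(a, b) Zpow_e z hn b.+1 (lift ord0 a) 0.

End KrylovColumns.

Lemma horner_nderivn_sum_XnS (R : comNzRingType) k (c : 'I_k -> R) r x :
  (\sum_(b < k) c b *: 'X^(b.+1))^`N(r).[x] =
  \sum_(b < k) 'C(b.+1, r)%:R * x ^+ (b.+1 - r) * c b.
Proof.
rewrite linear_sum horner_sum; apply: eq_bigr => b _.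
by rewrite linearZ /= nderivnXn hornerZ hornerMn hornerXn mulrC mulr_natl.
Qed.

Section RootMultiplicity.
Variable R : idomainType.

Lemma dvdp_exp_XsubC_nderivn (x : R) (M : nat) (Q : {poly R}) :
  (forall r, (r < M)%N -> Q^`N(r).[x] = 0) -> ('X - x%:P) ^+ M %| Q.
Proof.
elim: M Q => [|M IHM] Q Q_r; first by rewrite expr0 dvd1p.
have /factor_theorem [q Qq] : root Q x by rewrite /root -(nderivn0 Q) Q_r.
subst Q.
rewrite exprSr dvdp_mul ?dvdpp // IHM // => r ltrM.
have := Q_r r.+1 ltrM; rewrite mulrBr nderivnB [q * x%:P]mulrC mul_polyC nderivnZ.
have := nderivnMXaddC r q 0; rewrite polyC0 addr0 => ->.
by rewrite !hornerE [x * _]mulrC addrK.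
Qed.

Lemma dvdp_prod_exp_XsubC (I : finType) (x : I -> R) (mu : I -> nat) (Q : {poly R}) :
  injective x -> (forall i, ('X - (x i)%:P) ^+ mu i %| Q) ->
  \prod_i ('X - (x i)%:P) ^+ mu i %| Q.
Proof.
move=> x_inj dvdQ; rewrite -big_enum /=.
elim: (enum I) (enum_uniq I) => [|i s IHs] /=; first by rewrite big_nil dvd1p.
case/andP => i_notin_s s_uniq; rewrite big_cons Gauss_dvdp ?dvdQ ?IHs //.
rewrite coprimep_expl // coprimep_sym coprimep_XsubC /root horner_prod.
rewrite prodf_seq_neq0; apply/allP => i' i's /=.
rewrite horner_exp !hornerE expf_neq0 // subr_eq0.
by apply: contraNneq i_notin_s => /x_inj ->.
Qed.

End RootMultiplicity.

Section KrylovRank.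
Variable F : fieldType.
Variables (m n : nat) (nj : 'I_m.+1 -> nat) (z : 'I_m.+1 -> F).
Variable hn : (\sum_(j < m.+1) nj j)%N = n.+1.

Hypotheses (nj_gt0 : forall j, (0 < nj j)%N) (z0 : z ord0 = 0) (z_inj : injective z).

Lemma krylov_mx_ker_nderivn k (y : 'cV[F]_k) j (r : 'I_(nj j)) :
  krylov_mx z hn k *m y = 0 -> (\sum_(b < k) y b 0 *: 'X^(b.+1))^`N(r).[z j] = 0.
Proof.
move=> Wy0; rewrite horner_nderivn_sum_XnS.
under eq_bigr => b _ do rewrite -(Zpow_e_Rank z hn).
case: (unliftP ord0 (cast_ord hn (tagnat.Rank j r))) => [a -> | Rank_ord0].
  move/matrixP/(_ a 0): Wy0; rewrite !mxE => Wy0_a; rewrite -[RHS]Wy0_a.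
  by apply: eq_bigr => b _; rewrite [krylov_mx z hn k a b]mxE.
have Rank00 : tagnat.Rank ord0 (Ordinal (nj_gt0 ord0)) = 0 :> nat.
  by rewrite tagnat.RankEsum big_pred0.
have /andP [/eqP j0 /eqP r0] : (j == ord0) && (r == 0 :> nat).
  rewrite -(tagnat.eq_Rank r (Ordinal (nj_gt0 ord0))) Rank00.
  by rewrite -[val (tagnat.Rank j r)]/(val (cast_ord hn (tagnat.Rank j r))) Rank_ord0.
by apply: big1 => b _; rewrite Zpow_e_Rank r0 j0 z0 subn0 expr0n mulr0 mul0r.
Qed.

Lemma size_prod_exp_XsubC :
  size (\prod_j ('X - (z j)%:P) ^+ nj j) = n.+2.
Proof.
rewrite size_prod => [|j _]; last by rewrite expf_neq0 // polyXsubC_eq0.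
under eq_bigr do rewrite size_exp_XsubC -addn1.
by rewrite big_split /= sum1_card card_ord hn -addSn addnK.
Qed.

Lemma krylov_mx_inj k (y : 'cV[F]_k) : (k <= n)%N -> krylov_mx z hn k *m y = 0 -> y = 0.
Proof.
move=> le_kn Wy0; set Q := \sum_(b < k) y b 0 *: 'X^(b.+1).
have dvdQ : \prod_j ('X - (z j)%:P) ^+ nj j %| Q.
  apply: dvdp_prod_exp_XsubC z_inj _ => j; apply: dvdp_exp_XsubC_nderivn => r ltr.
  exact: (krylov_mx_ker_nderivn (Ordinal ltr) Wy0).
have Q0 : Q = 0.
  apply: contraTeq dvdQ => /dvdp_leq leQ; apply/negP => /leQ.
  rewrite size_prod_exp_XsubC ltnNge; apply/negP/negPn.
  apply: leq_trans (size_sum _ _ _) _; apply/bigmax_leqP => b _.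
  rewrite (leq_trans (size_scale_leq _ _)) // size_polyXn.
  exact: leq_trans (ltn_ord b) le_kn.
apply/matrixP => b i; rewrite ord1 mxE.
have := congr1 (fun p : {poly F} => p`_b.+1) Q0.
by rewrite coef0 coef_sumMXn (big_pred1 b) // => b'; rewrite /= eqSS.
Qed.

End KrylovRank.

Lemma tensmx1_mulE (R : pzRingType) p q l (X : 'cV[R]_p) (N : 'M[R]_(1 * l, q)) a s c :
  ((X *t (1%:M : 'M_l)) *m N) (mxtens_index (a, s)) c =
  X a 0 * N (mxtens_index (0, s)) c.
Proof.
rewrite mxE (bigD1 (mxtens_index (0, s))) //= big1 ?addr0.
  by rewrite tensmxE mxE eqxx mulr1.
move=> k; case: (mxtens_indexP k) => i s'; rewrite ord1 => ne_s'.
rewrite tensmxE mxE; case: eqP => [eq_ss'|]; last by rewrite mulr0 mul0r.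
by rewrite eq_ss' eqxx in ne_s'.
Qed.

Section VNEntries.
Variable R : comPzRingType.
Variables (m n l t : nat) (nj : 'I_m.+1 -> nat) (z : 'I_m.+1 -> R).
Variable hn : (\sum_(j < m.+1) nj j)%N = n.+1.
Variables (ts : 'I_l -> nat) (ht : (\sum_(i < l) ts i)%N = (n * l)%N).

(* Column b of the i-th column block of N and row (a + 1) l + s of V N, seen
   as indices of the lower block L. *)
Definition lcol i (b : 'I_(ts i)) : 'I_(l * n) :=
  cast_ord (etrans ht (mulnC n l)) (tagnat.Rank i b).

Definition lrow (a : 'I_n) (s : 'I_l) : 'I_(l * n) :=
  cast_ord (mulnC n l) (mxtens_index (a, s)).

Lemma Nk_lcol k s i (b : 'I_(ts i)) :
  Nk R ht k (mxtens_index (0, s)) (lcol b) = (s == i)%:R * (b.+1 == k)%:R.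
Proof.
rewrite /Nk castmxE cast_ordK mxE.
have -> : tagnat.sig1 (cast_ord (esym (sum1_ord l)) (mxtens_index (0, s))) = s.
  have -> : cast_ord (esym (sum1_ord l)) (mxtens_index (0, s)) =
            tagnat.Rank s (0 : 'I_1).
    apply: ord_inj; rewrite tagnat.RankEsum /= mul0n add0n addn0.
    by rewrite (big_ord_narrow (ltnW (ltn_ord s))) sum1_card card_ord.
  exact: tagnat.Rank1K.
case: eqP => [-> | ne_si]; rewrite mxE.
  by rewrite tagnat.Rank2K /= tagnat.Rank1K eqxx mul1r.
by move: ne_si; rewrite tagnat.Rank1K => /eqP /negbTE ->; rewrite mul0r.
Qed.

Lemma lcol_onto (c : 'I_(l * n)) : exists i (b : 'I_(ts i)), c = lcol b.
Proof.
exists (tagnat.sig1 (cast_ord (esym (etrans ht (mulnC n l))) c)), (tagnat.sig2 _).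
by rewrite /lcol tagnat.sig2K cast_ordKV.
Qed.

Lemma lrow_onto (r : 'I_(l * n)) : exists a s, r = lrow a s.
Proof.
set p := mxtens_unindex (cast_ord (esym (mulnC n l)) r); exists p.1, p.2.
by rewrite /lrow -surjective_pairing mxtens_unindexK cast_ordKV.
Qed.

Lemma VN_prod_entry a s i (b : 'I_(ts i)) :
  (Vmat l t z hn *m Nmat R t ht) (mxtens_index (a, s)) (lcol b) =
  (s == i)%:R * (if (b < t)%N then Zpow_e z hn b.+1 a 0 else 0).
Proof.
rewrite mul_mxrow_mxcol summxE.
under eq_bigr => k _ do rewrite tensmx1_mulE Nk_lcol mulrCA mulrC eqSS.
rewrite -mulr_suml mulrC; congr (_ * _).
under eq_bigr do rewrite mulrC.
case: ltnP => [ltbt | letb].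
  exact: (sum_ord_delta (fun k => Zpow_e z hn k.+1 a 0)).
apply: big1 => k _; case: eqP => [eq_bk | _]; last by rewrite mul0r.
by move: letb; rewrite eq_bk leqNgt ltn_ord.
Qed.

Lemma usub_VN (nj_gt0 : (0 < nj ord0)%N) (z0 : z ord0 = 0) :
  usubmx (VN t z hn ht) = 0.
Proof.
apply/matrixP => r c; have [i [b ->]] := lcol_onto c.
rewrite !mxE castmxE cast_ord_id.
have -> : cast_ord (esym (rows_split n l)) (lshift (l * n) r) = mxtens_index (ord0, r).
  by apply: ord_inj; rewrite /= mul0n.
have -> : ord0 = cast_ord hn (tagnat.Rank ord0 (Ordinal nj_gt0)).
  apply: ord_inj; rewrite -[RHS]/(nat_of_ord (tagnat.Rank _ _)).
  by rewrite tagnat.RankEsum big_pred0.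
rewrite VN_prod_entry Zpow_e_Rank z0 subn0 expr0n /=.
by case: ifP; rewrite !mulr0.
Qed.

Lemma sum_lcol (G : 'I_(l * n) -> R) :
  \sum_c G c = \sum_i \sum_(b : 'I_(ts i)) G (lcol b).
Proof.
pose E := etrans ht (mulnC n l).
rewrite (reindex (cast_ord E)) /=; last first.
  by exists (cast_ord (esym E)) => c _; rewrite ?cast_ordK ?cast_ordKV.
rewrite sig_big_dep /= (reindex _ tagnat.sig_bij_on) /=.
by apply: eq_bigr => c _; rewrite /lcol -tagnat.rankE tagnat.sigK.
Qed.

Lemma dsub_VN_entry a s i (b : 'I_(ts i)) : (ts i <= t)%N ->
  dsubmx (VN t z hn ht) (lrow a s) (lcol b) = (s == i)%:R * krylov_mx z hn (ts i) a b.
Proof.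
move=> le_tsi_t; rewrite mxE castmxE cast_ord_id [krylov_mx z hn (ts i) a b]mxE.
have -> : cast_ord (esym (rows_split n l)) (rshift l (lrow a s)) =
          mxtens_index (lift ord0 a, s).
  by apply: ord_inj; rewrite /= mulSn addnA.
by rewrite VN_prod_entry (leq_trans (ltn_ord b) le_tsi_t).
Qed.

End VNEntries.

Section LinearAlgebra.
Variable F : fieldType.

Lemma row_free_trP p q (A : 'M[F]_(p, q)) :
  reflect (forall x : 'cV_q, A *m x = 0 -> x = 0) (row_free A^T).
Proof.
apply: (iffP idP) => [freeAT x Ax0 | Ainj].
  apply: trmx_inj; apply/eqP.
  by rewrite trmx0 -(mulmx_free_eq0 _ freeAT) -trmx_mul Ax0 trmx0.
apply: inj_row_free => v vAT0; apply: trmx_inj; rewrite trmx0; apply: Ainj.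
by rewrite -[A]trmxK -trmx_mul vAT0 trmx0.
Qed.

Lemma unitmx_kerP p (A : 'M[F]_p) :
  reflect (forall x : 'cV_p, A *m x = 0 -> x = 0) (A \in unitmx).
Proof. by rewrite -unitmx_tr -row_free_unit; apply: row_free_trP. Qed.

Lemma mulmx_inj_leq p q (A : 'M[F]_(p, q)) :
  (forall x : 'cV_q, A *m x = 0 -> x = 0) -> (q <= p)%N.
Proof. by move/row_free_trP/eqP <-; apply: rank_leq_col. Qed.

End LinearAlgebra.

Lemma sum_leq_const_eq (I : finType) (f : I -> nat) (c : nat) :
  (forall i, f i <= c)%N -> (\sum_i f i = \sum_(i : I) c)%N -> forall i, f i = c.
Proof.
move=> le_fc sum_eq i; apply/eqP.
have [_] := leqif_sum (fun i (_ : true) => leqif_eq (le_fc i)).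
by rewrite sum_eq eqxx => /esym /forall_inP ->.
Qed.

Section LowerBlock.
Variable F : fieldType.
Variables (m n l t : nat) (nj : 'I_m.+1 -> nat) (z : 'I_m.+1 -> F).
Variable hn : (\sum_(j < m.+1) nj j)%N = n.+1.
Variables (ts : 'I_l -> nat) (ht : (\sum_(i < l) ts i)%N = (n * l)%N).
Hypothesis ts_le_t : forall i, (ts i <= t)%N.

Local Notation L := (dsubmx (VN t z hn ht)).

Definition lseg i (x : 'cV[F]_(l * n)) : 'cV[F]_(ts i) := \col_b x (lcol ht b) 0.

Lemma lseg_eq0 x : (forall i, lseg i x = 0) -> x = 0.
Proof.
move=> x0; apply/matrixP => c j; have [i [b ->]] := lcol_onto ht c.
by move/matrixP/(_ b 0): (x0 i); rewrite !mxE ord1.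
Qed.

Lemma lseg_single s (y : 'cV[F]_(ts s)) :
  exists x, lseg s x = y /\ forall i, i != s -> lseg i x = 0.
Proof.
(* Reading y at a natural index avoids casting 'I_(ts i) to 'I_(ts s). *)
pose y_nat (b : nat) := \sum_(b' < ts s | b' == b :> nat) y b' 0.
pose c' c := cast_ord (esym (etrans ht (mulnC n l))) c.
pose x := \col_c (if tagnat.sig1 (c' c) == s then y_nat (tagnat.sig2 (c' c)) else 0).
have xE i (b : 'I_(ts i)) : x (lcol ht b) 0 = if i == s then y_nat b else 0.
  by rewrite mxE /c' cast_ordK tagnat.Rank2K /= tagnat.Rank1K.
exists x; split => [|i ne_is]; apply/matrixP => b j; rewrite mxE xE.
  by rewrite eqxx ord1 /y_nat (big_pred1 b) // => b'; rewrite val_eqE.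
by rewrite (negbTE ne_is) mxE.
Qed.

Lemma dsub_VN_mulE x a s :
  (L *m x) (lrow a s) 0 = (krylov_mx z hn (ts s) *m lseg s x) a 0.
Proof.
rewrite [LHS]mxE [RHS]mxE (sum_lcol ht) (bigD1 s) //= [X in _ + X]big1 => [|i ne_is].
  rewrite addr0; apply: eq_bigr => b _.
  by rewrite dsub_VN_entry // eqxx mul1r [lseg s x b 0]mxE.
by apply: big1 => b _; rewrite dsub_VN_entry // eq_sym (negbTE ne_is) !mul0r.
Qed.

Lemma dsub_VN_mul_eq0 x :
  L *m x = 0 <-> forall s, krylov_mx z hn (ts s) *m lseg s x = 0.
Proof.
split=> [Lx0 s | Wx0]; apply/matrixP => r j; rewrite ord1.
  by rewrite -dsub_VN_mulE Lx0 !mxE.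
by have [a [s ->]] := lrow_onto r; rewrite dsub_VN_mulE Wx0 !mxE.
Qed.

Hypotheses (nj_gt0 : forall j, (0 < nj j)%N) (z0 : z ord0 = 0) (z_inj : injective z).

Theorem VN_blocks_unitmx :
  usubmx (VN t z hn ht) = 0 /\ (L \in unitmx <-> forall i, ts i = n).
Proof.
split; first exact: usub_VN.
split=> [/unitmx_kerP L_inj | ts_n]; last first.
  apply/unitmx_kerP => x /dsub_VN_mul_eq0 Wx0; apply: lseg_eq0 => s.
  by apply: krylov_mx_inj (Wx0 s) => //; rewrite ts_n.
have ts_le_n s : (ts s <= n)%N.
  apply: (mulmx_inj_leq (A := krylov_mx z hn (ts s))) => y Wy0.
  have [x [xs_y xi_0]] := lseg_single y.
  have Lx0 : L *m x = 0.
    apply/dsub_VN_mul_eq0 => i; have [-> | ne_is] := eqVneq i s; first by rewrite xs_y.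
    by rewrite xi_0 // mulmx0.
  by rewrite -xs_y (L_inj x Lx0); apply/matrixP => b j; rewrite !mxE.
apply: sum_leq_const_eq ts_le_n _.
by rewrite ht sum_nat_const card_ord mulnC.
Qed.

End LowerBlock.

Unset Implicit Arguments.
Local Open Scope complex_scope.

Theorem lemma3 (R : realType) (l m n : nat) (nj : 'I_m.+1 -> nat)
  (z : 'I_m.+1 -> R[i]) (ts : 'I_l -> nat)
  (hl : (1 <= l)%N)
  (hnj : forall j, (0 < nj j)%N)
  (hn : (\sum_(j < m.+1) nj j)%N = n.+1)
  (hn1 : (1 <= n)%N)
  (hz0 : z ord0 = 0)
  (hzinj : injective z)
  (hzdisc : forall j, `|z j| < 1)
  (hts : forall i, (0 < ts i)%N)
  (ht : (\sum_(i < l) ts i)%N = (n * l)%N) :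
  let t := (\max_(i < l) ts i)%N in
  usubmx (VN t z hn ht) = 0 /\
  (dsubmx (VN t z hn ht) \in unitmx <-> forall i, ts i = n).
Proof.
by move=> t; apply: VN_blocks_unitmx => // i; apply: leq_bigmax.
Qed.
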